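(* For all $v,w\in\mathfrak{H}^0$, $Z_q^t(v\stackrel{t}{\ast}_\hbar w)=Z_q^t(v)\,Z_q^t(w)$.
   Context: Let $q$, $t$ be formal parameters and $[n]=\frac{1-q^n}{1-q}$. For positive integers $k_1,\dots,k_l$ with $k_1\ge 2$ put $\zeta_q(k_1,\dots,k_l)=\sum_{m_1>\cdots>m_l\ge1}\prod_{a=1}^l \frac{q^{(k_a-1)m_a}}{[m_a]^{k_a}}$. Define $\zeta_q^t(k_1,\dots,k_l)=\sum'_{\mathbf p}(1-q)^{k-\mathrm{wt}(\mathbf p)}\zeta_q(\mathbf p)\,t^{l-\mathrm{dep}(\mathbf p)}$, where $k=k_1+\cdots+k_l$, wt and dep denote the sum and the number of entries of an index, and $\mathbf p$ runs over all indices $(k_1\ \square\ k_2\ \square\cdots\square\ k_l)$ with each $\square$ filled by '','' , ''$+$'' or ''$-1+$''. Let $\hbar$ be a formal variable, $\mathfrak{H}=\mathbb{Q}[\hbar,t]\langle x,y\rangle$, $\mathfrak{H}^1=\mathbb{Q}[\hbar,t]+\mathfrak{H}y$, $\mathfrak{H}^0=\mathbb{Q}[\hbar,t]+x\mathfrak{H}y$, $z_j=x^{j-1}y$. Let $Z_q^t:\mathfrak{H}^0\to\mathbb{Q}[t][[q]]$ be the composition of the $\mathbb{Q}[\hbar,t]$-linear map $\widehat Z_q^t$ with $\widehat Z_q^t(1)=1$, $\widehat Z_q^t(z_{k_1}\cdots z_{k_l})=\zeta_q^t(k_1,\dots,k_l)$ ($k_1\ge2$), followed by the substitution $\hbar\mapsto1-q$.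 Let $z_i\circ_+ z_j=z_{i+j}+\hbar z_{i+j-1}$ on the $\mathbb{Q}[\hbar,t]$-span $\mathfrak z$ of the $z_j$, extended to an action on $\mathfrak{H}^1$ by $z_i\circ_+1=0$, $z_i\circ_+(z_jw)=(z_i\circ_+z_j)w$. The product $\stackrel{t}{\ast}_\hbar$ on $\mathfrak{H}^1$ is the $\mathbb{Q}[\hbar,t]$-bilinear product with $1\stackrel{t}{\ast}_\hbar w=w\stackrel{t}{\ast}_\hbar1=w$ and $z_iu\stackrel{t}{\ast}_\hbar z_jv=z_i(u\stackrel{t}{\ast}_\hbar z_jv)+z_j(z_iu\stackrel{t}{\ast}_\hbar v)+(1-2t)(z_i\circ_+z_j)(u\stackrel{t}{\ast}_\hbar v)+(t^2-t)\,z_i\circ_+z_j\circ_+(u\stackrel{t}{\ast}_\hbar v)$ for $i,j\ge1$ and words $u,v,w$ ($(z_i\circ_+z_j)X$ denotes concatenation; $z_i\circ_+z_j\circ_+X=(z_i\circ_+z_j)\circ_+X$). *)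

From mathcomp Require Import all_boot all_algebra.
Set Implicit Arguments. Unset Strict Implicit. Unset Printing Implicit Defensive.
Import GRing.Theory.
Local Open Scope ring_scope.

(* Coefficient rings:  Q[t] = {poly rat} (variable t),
   Q[hbar,t] = {poly {poly rat}} (outer variable hbar, inner variable t). *)
Definition Qt := {poly rat}.
Definition Qht := {poly {poly rat}}.
Definition tvar : Qt := 'X.
Definition hbar : Qht := 'X.

(* a series is its coefficient sequence: f n = coefficient of q^n *)
Definition ser := nat -> Qt.
Definition sone : ser := fun n => (n == 0%N)%:R.
Definition sscale (c : Qt) (f : ser) : ser := fun n => c * f n.
Definition smul (f g : ser) : ser := fun n => \sum_(i < n.+1) f i * g (n - i)%N.
Definition spow (f : ser) (k : nat) : ser := iter k (smul f) sone.
Definition sq : ser := fun n => (n == 1%N)%:R.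
Definition s1mq : ser := fun n => (n == 0%N)%:R - (n == 1%N)%:R.
(* 1/(1 - q^m)  (m >= 1) *)
Definition sgeom (m : nat) : ser := fun n => (m %| n)%:R.

(* q^{(k-1)m} / [m]^k = q^{(k-1)m} (1-q)^k / (1-q^m)^k *)
Definition sterm (k m : nat) : ser :=
  smul (spow sq ((k - 1) * m)%N) (smul (spow s1mq k) (spow (sgeom m) k)).

(* zpart ks M = sum_{M > m_1 > ... > m_l >= 1} prod_a q^{(k_a-1)m_a}/[m_a]^{k_a} *)
Fixpoint zpart (ks : seq nat) (M : nat) : ser :=
  match ks with
  | [::] => sone
  | k :: ks' => fun n => \sum_(1 <= m < M) smul (sterm k m) (zpart ks' m) n
  end.

(* zeta_q(k_1,...,k_l) for k_1 >= 2, as a formal power series in q.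
   The summand indexed by m_1 has q-order >= (k_1 - 1) m_1 >= m_1, so the
   (q-adically convergent) formal sum over m_1 >= 1 has coefficient of q^n
   equal to that of the finite partial sum over m_1 <= n. *)
Definition zeta_q (ks : seq nat) : ser := fun n => zpart ks n.+1 n.

(* all indices (k_1 [] k_2 [] ... [] k_l) with each [] one of "," "+" "-1+"
   (listed with multiplicity, one entry per filling) *)
Fixpoint fillings (ks : seq nat) : seq (seq nat) :=
  match ks with
  | [::] => [:: [::]]
  | [:: k] => [:: [:: k]]
  | k :: ks' =>
      flatten [seq (match p with
                    | [::] => [::]
                    | h :: tl => [:: k :: h :: tl; (k + h)%N :: tl; (k + h - 1)%N :: tl]
                    end) | p <- fillings ks']
  end.

Definition zeta_t (ks : seq nat) : ser := fun n =>
  \sum_(p <- fillings ks)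
     sscale (tvar ^+ (size ks - size p)%N)
            (smul (spow s1mq (sumn ks - sumn p)%N) (zeta_q p)) n.

(* A word of H^1 (a word in x,y ending in y, or the empty word) is written
   uniquely as z_{k_1} ... z_{k_l}, encoded as the list [:: k_1; ...; k_l]
   (k_a >= 1).  An element of H^1 is a finite formal Q[hbar,t]-linear
   combination of such words, encoded as a list of (coefficient, word). *)
Definition fsum := seq (Qht * seq nat).
Definition fscale (c : Qht) (X : fsum) : fsum := [seq (c * x.1, x.2) | x <- X].
Definition prefix (k : nat) (X : fsum) : fsum := [seq (x.1, k :: x.2) | x <- X].

(* z_k o+ w for a word w:  z_k o+ 1 = 0,
   z_k o+ (z_m w') = (z_k o+ z_m) w' = z_{k+m} w' + hbar z_{k+m-1} w' *)
Definition circ_word (k : nat) (w : seq nat) : fsum :=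
  if w is m :: w' then [:: (1, (k + m)%N :: w'); (hbar, (k + m - 1)%N :: w')] else [::].
Definition circ (k : nat) (X : fsum) : fsum :=
  flatten [seq fscale x.1 (circ_word k x.2) | x <- X].

Fixpoint tstar (u : seq nat) : seq nat -> fsum :=
  match u with
  | [::] => fun v => [:: (1, v)]
  | i :: u' =>
      fix tstar_u (v : seq nat) : fsum :=
        match v with
        | [::] => [:: (1, i :: u')]
        | j :: v' =>
            let uv := tstar u' v' in
            prefix i (tstar u' (j :: v'))
            ++ prefix j (tstar_u v')
            (* (1-2t) (z_i o+ z_j)(u * v) *)
            ++ fscale (1 - 2%:R * tvar)%:P
                      (prefix (i + j)%N uv ++ fscale hbar (prefix (i + j - 1)%N uv))
            (* (t^2 - t) z_i o+ z_j o+ (u * v) *)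
            ++ fscale (tvar ^+ 2 - tvar)%:P
                      (circ (i + j)%N uv ++ fscale hbar (circ (i + j - 1)%N uv))
        end
  end.

Definition star (v w : fsum) : fsum :=
  flatten [seq fscale (x.1 * y.1) (tstar x.2 y.2) | x <- v, y <- w].

Definition eval_hbar (c : Qht) : ser := fun n =>
  \sum_(i < size c) sscale c`_i (spow s1mq i) n.

Definition Zqt (v : fsum) : ser := fun n =>
  \sum_(x <- v) smul (eval_hbar x.1) (zeta_t x.2) n.

Definition admissible_word (a : seq nat) : bool :=
  all (fun k => 0 < k)%N a && (if a is k :: _ then (1 < k)%N else true).
Definition in_H0 (v : fsum) : bool := all (fun x => admissible_word x.2) v.

From HB Require Import structures.
From mathcomp Require Import all_boot all_algebra.
From mathcomp Require Import boolp ring zify.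
Set Implicit Arguments. Unset Strict Implicit. Unset Printing Implicit Defensive.
Import GRing.Theory.
Local Open Scope ring_scope.

(* Let Z_M be zeta_q^t with the outermost summation restricted to m_1 < M and
   f_k(m) = q^{(k-1)m}/[m]^k.  Summing over the three ways of filling the first
   box gives
     Z_{M+1}(z_k w) = Z_M(z_k w) + f_k(M) ((1-t) Z_M(w) + t Z_{M+1}(w)),
   and f_i(m) f_j(m) = f_{i+j}(m) + (1-q) f_{i+j-1}(m) is exactly the relation
   encoded by z_i o+ z_j.  Expanding Z_{M+1} of the recursive definition of the
   product with these two identities shows, by induction on M and on the lengths
   of the words, that Z_M is multiplicative on positive words.  Since k_1 >= 2,
   the term of index m_1 has q-adic order >= m_1, so the coefficient of q^n of
   Z_q^t agrees with that of Z_M as soon as M > n. *)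

HB.instance Definition _ := gen_eqMixin ser.
HB.instance Definition _ := gen_choiceMixin ser.

Definition szero : ser := fun _ => 0.
Definition sadd (f g : ser) : ser := fun n => f n + g n.
Definition sopp (f : ser) : ser := fun n => - f n.

Lemma saddA : associative sadd.
Proof. by move=> f g h; apply: funext => n; rewrite /sadd addrA. Qed.
Lemma saddC : commutative sadd.
Proof. by move=> f g; apply: funext => n; rewrite /sadd addrC. Qed.
Lemma add0s : left_id szero sadd.
Proof. by move=> f; apply: funext => n; rewrite /sadd /szero add0r. Qed.
Lemma addNs : left_inverse szero sopp sadd.
Proof. by move=> f; apply: funext => n; rewrite /sadd /szero /sopp addNr. Qed.
HB.instance Definition _ := GRing.isZmodule.Build ser saddA saddC add0s addNs.

(* The coefficient of q^n in a product only involves the first n + 1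
   coefficients of the factors, so the ring laws of [smul] are inherited from
   polynomial multiplication. *)
Definition strunc (n : nat) (f : ser) : {poly Qt} := \poly_(i < n.+1) f i.

Lemma coef_strunc n f i : (i <= n)%N -> (strunc n f)`_i = f i.
Proof. by move=> hi; rewrite coef_poly ltnS hi. Qed.

Lemma smul_coefM n (f g : ser) (P Q : {poly Qt}) :
  (forall i, (i <= n)%N -> P`_i = f i) -> (forall i, (i <= n)%N -> Q`_i = g i) ->
  smul f g n = (P * Q)`_n.
Proof.
move=> hP hQ; rewrite coefM; apply: eq_bigr => i _.
by rewrite hP ?hQ ?leq_subr // -ltnS.
Qed.

Lemma smul_strunc n k f g : (k <= n)%N -> smul f g k = (strunc n f * strunc n g)`_k.
Proof. by move=> hk; apply: smul_coefM => i hi; rewrite coef_strunc ?(leq_trans hi). Qed.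

Lemma smulA : associative smul.
Proof.
move=> f g h; apply: funext => n.
rewrite (@smul_coefM n _ _ (strunc n f) (strunc n g * strunc n h)); last 2 first.
- by move=> i hi; rewrite coef_strunc.
- by move=> i hi; rewrite (smul_strunc _ _ hi).
rewrite (@smul_coefM n _ _ (strunc n f * strunc n g) (strunc n h)) ?mulrA //.
- by move=> i hi; rewrite (smul_strunc _ _ hi).
- by move=> i hi; rewrite coef_strunc.
Qed.

Lemma smulC : commutative smul.
Proof.
by move=> f g; apply: funext => n; rewrite !(smul_strunc _ _ (leqnn n)) mulrC.
Qed.

Lemma smul1s : left_id sone smul.
Proof.
move=> f; apply: funext => n.
rewrite (@smul_coefM n _ _ 1 (strunc n f)) ?mul1r ?coef_strunc // => i hi.
  by rewrite coef1.
by rewrite coef_strunc.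
Qed.

Lemma smulDl : left_distributive smul sadd.
Proof.
move=> f g h; apply: funext => n.
have struncD : strunc n (sadd f g) = strunc n f + strunc n g.
  by apply/polyP => i; rewrite coefD !coef_poly; case: ifP; rewrite ?addr0.
by rewrite /sadd !(smul_strunc _ _ (leqnn n)) -coefD -mulrDl -struncD.
Qed.

Lemma sone_neq0 : sone != szero.
Proof. by apply/eqP => /(congr1 (fun f => f 0%N)) /eqP; rewrite oner_eq0. Qed.

HB.instance Definition _ :=
  GRing.Zmodule_isComNzRing.Build ser smulA smulC smul1s smulDl sone_neq0.

Lemma mul_serE (f g : ser) : f * g = smul f g. Proof. by []. Qed.
Lemma add_serE (f g : ser) n : (f + g) n = f n + g n. Proof. by []. Qed.
Lemma sub_serE (f g : ser) n : (f - g) n = f n - g n. Proof. by []. Qed.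
Lemma one_serE n : (1 : ser) n = (n == 0)%N%:R. Proof. by []. Qed.
Lemma sum_serE I (r : seq I) (P : pred I) (F : I -> ser) n :
  (\sum_(i <- r | P i) F i) n = \sum_(i <- r | P i) F i n.
Proof. by elim/big_rec2: _ => // i x y _ <-. Qed.
Lemma spowE (f : ser) k : spow f k = f ^+ k.
Proof. by elim: k => // k IH; rewrite exprS -IH. Qed.

Definition sconst (c : Qt) : ser := sscale c sone.

Lemma coef_sconstM c (f : ser) n : (sconst c * f) n = c * f n.
Proof.
rewrite mul_serE /smul big_ord_recl /= /sconst /sscale /sone /= mulr1 subn0.
by rewrite big1 ?addr0 // => i _; rewrite mulr0 mul0r.
Qed.

Lemma sscaleE c (f : ser) : sscale c f = sconst c * f.
Proof. by apply: funext => n; rewrite coef_sconstM. Qed.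

Lemma sconst_is_zmod_morphism : zmod_morphism sconst.
Proof. by move=> a b; apply: funext => n; rewrite /sconst /sscale /= mulrBl. Qed.
Lemma sconst_is_monoid_morphism : monoid_morphism sconst.
Proof.
split; first by apply: funext => n; rewrite /sconst /sscale mul1r.
by move=> a b; apply: funext => n; rewrite coef_sconstM /sconst /sscale mulrA.
Qed.
HB.instance Definition _ := GRing.isZmodMorphism.Build Qt ser sconst sconst_is_zmod_morphism.
HB.instance Definition _ :=
  GRing.isMonoidMorphism.Build Qt ser sconst sconst_is_monoid_morphism.

Lemma sconst_inj : injective sconst.
Proof. by move=> a b /(congr1 (fun f : ser => f 0%N)); rewrite /sconst /sscale /sone !mulr1. Qed.

Definition st : ser := sconst tvar.

Lemma coef_sqM (f : ser) n : (sq * f) n = if (1 <= n)%N then f (n - 1)%N else 0.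
Proof.
rewrite mul_serE /smul big_ord_recl /sq /= mul0r add0r.
case: n => [|n]; first by rewrite big_ord0.
rewrite big_ord_recl /= mul1r subSS subn0 big1 ?addr0 //.
by move=> i _; rewrite mul0r.
Qed.

Lemma coef_sqXM a (f : ser) n : (sq ^+ a * f) n = if (a <= n)%N then f (n - a)%N else 0.
Proof.
elim: a n => [|a IH] n; first by rewrite mul1r subn0.
rewrite exprS -mulrA coef_sqM; case: n => [|n] //=.
by rewrite subSS subn0 IH; case: ifP => // _; rewrite subnS.
Qed.

Lemma sgeomMsubX m : (0 < m)%N -> sgeom m * (1 - sq ^+ m) = 1.
Proof.
move=> hm; rewrite mulrBr mulr1 mulrC; apply: funext => n.
rewrite sub_serE coef_sqXM one_serE /sgeom.
case: leqP => hmn.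
- have -> : (n == 0)%N = false by apply/eqP; lia.
  by rewrite -[in (m %| n)%N](subnK hmn) dvdn_addl // subrr.
- case: n hmn => [|n] hmn; first by rewrite dvdn0 subr0.
  by rewrite gtnNdvd ?subr0.
Qed.

Lemma stermE k m : sterm k m = sq ^+ ((k - 1) * m) * (s1mq ^+ k * sgeom m ^+ k).
Proof. by rewrite /sterm !spowE. Qed.

Lemma stermM i j m : (0 < i)%N -> (0 < j)%N -> (0 < m)%N ->
  sterm i m * sterm j m = sterm (i + j) m + s1mq * sterm (i + j - 1) m.
Proof.
case: i => // i; case: j => // j _ _ hm.
rewrite !stermE addSn addnS !subn1 /= !(mulnC _ m) !exprM !exprS !exprD.
have := sgeomMsubX hm; set Q := sq ^+ m; set g := sgeom m => hg.
apply/eqP; rewrite -subr_eq0; apply/eqP.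
transitivity (Q ^+ i * Q ^+ j * s1mq ^+ i * s1mq ^+ j * s1mq * s1mq * g ^+ i * g ^+ j * g
              * (g * (1 - Q) - 1)); first by ring.
by rewrite hg subrr mulr0.
Qed.

Lemma stermD i j m : (0 < i)%N -> (0 < j)%N -> (0 < m)%N ->
  sterm (i + j) m = sterm i m * sterm j m - s1mq * sterm (i + j - 1) m.
Proof. by move=> hi hj hm; rewrite stermM ?addrK. Qed.

Arguments zpart : simpl never.

Definition pos_word (w : seq nat) : bool := all (fun k => 0 < k)%N w.
Arguments pos_word : simpl never.

Lemma pos_word_cons k w : pos_word (k :: w) = (0 < k)%N && pos_word w.
Proof. by []. Qed.

Lemma zpart_nil M : zpart [::] M = 1. Proof. by []. Qed.

Lemma zpart_cons k w M : zpart (k :: w) M = \sum_(1 <= m < M) sterm k m * zpart w m.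
Proof. by apply: funext => n; rewrite sum_serE. Qed.

Lemma zpart_succ k w m : (0 < m)%N ->
  zpart (k :: w) m.+1 = zpart (k :: w) m + sterm k m * zpart w m.
Proof. by move=> hm; rewrite !zpart_cons big_nat_recr. Qed.

Lemma zpart_fill_first k h0 tl M : (0 < k)%N -> (0 < h0)%N ->
  zpart (k :: h0 :: tl) M
    + st * (zpart ((k + h0)%N :: tl) M + s1mq * zpart ((k + h0 - 1)%N :: tl) M)
  = \sum_(1 <= m < M) sterm k m * ((1 - st) * zpart (h0 :: tl) m + st * zpart (h0 :: tl) m.+1).
Proof.
move=> hk hh0; rewrite !zpart_cons !mulr_sumr -!big_split /= mulr_sumr -big_split /=.
apply: eq_big_nat => m /andP [hm _].
by rewrite zpart_succ // (stermD hk hh0 hm); ring.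
Qed.

Definition fill_first (k : nat) (p : seq nat) : seq (seq nat) :=
  if p is h0 :: tl then [:: k :: h0 :: tl; (k + h0)%N :: tl; (k + h0 - 1)%N :: tl] else [::].

Lemma fillings_cons2 k k' w :
  fillings (k :: k' :: w) = flatten [seq fill_first k p | p <- fillings (k' :: w)].
Proof. by []. Qed.

Lemma mem_fillings w p : pos_word w -> p \in fillings w ->
  [/\ pos_word p, (size p <= size w)%N, (sumn p <= sumn w)%N & (w == [::]) = (p == [::])].
Proof.
elim: w p => [|k w IH] p; first by rewrite inE => _ /eqP ->.
move=> /andP [hk hw]; case: w IH hw => [|k' w] IH hw.
  by rewrite inE => /eqP -> /=; rewrite pos_word_cons hk.
rewrite fillings_cons2 => /flatten_mapP [[|h0 tl] /IH [] //].
rewrite pos_word_cons => /andP [h0p tlp] /= sp sm _.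
rewrite !inE => /or3P [] /eqP -> /=; rewrite !pos_word_cons ?hk ?h0p tlp ?andbT.
all: split => //=; lia.
Qed.

Definition fill_weight (w p : seq nat) : ser :=
  sconst (tvar ^+ (size w - size p)) * s1mq ^+ (sumn w - sumn p).

Lemma fill_weight_first k w h0 tl : (0 < k)%N ->
  (size (h0 :: tl) <= size w)%N -> (sumn (h0 :: tl) <= sumn w)%N ->
  [/\ fill_weight (k :: w) (k :: h0 :: tl) = fill_weight w (h0 :: tl),
      fill_weight (k :: w) ((k + h0)%N :: tl) = st * fill_weight w (h0 :: tl)
    & fill_weight (k :: w) ((k + h0 - 1)%N :: tl) = st * s1mq * fill_weight w (h0 :: tl)].
Proof.
move=> hk /= hs hm; rewrite /fill_weight /st /=; split.
- by rewrite subSS; congr (_ * _ ^+ _); lia.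
- have -> : ((size w).+1 - (size tl).+1 = (size w - (size tl).+1).+1)%N by lia.
  have -> : (k + sumn w - (k + h0 + sumn tl) = sumn w - (h0 + sumn tl))%N by lia.
  by rewrite exprS rmorphM mulrA.
- have -> : ((size w).+1 - (size tl).+1 = (size w - (size tl).+1).+1)%N by lia.
  have -> : (k + sumn w - (k + h0 - 1 + sumn tl) = (sumn w - (h0 + sumn tl)).+1)%N by lia.
  by rewrite !exprS rmorphM; ring.
Qed.

Definition zeta_trunc (M : nat) (w : seq nat) : ser :=
  \sum_(p <- fillings w) fill_weight w p * zpart p M.

Lemma zeta_trunc_nil M : zeta_trunc M [::] = 1.
Proof. by rewrite /zeta_trunc big_seq1 /fill_weight expr0 rmorph1 !mul1r. Qed.

Lemma zeta_trunc_cons k w M : pos_word (k :: w) ->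
  zeta_trunc M (k :: w)
  = \sum_(1 <= m < M) sterm k m * ((1 - st) * zeta_trunc m w + st * zeta_trunc m.+1 w).
Proof.
move=> /andP [hk hw]; case: w hw => [|k' w] hw.
  rewrite {1}/zeta_trunc big_seq1 /fill_weight !subnn expr0 rmorph1 !mul1r zpart_cons.
  by apply: eq_bigr => m _; rewrite !zeta_trunc_nil zpart_nil; ring.
rewrite {1}/zeta_trunc fillings_cons2 big_flatten big_map.
set w0 := k' :: w; have {}hw : pos_word w0 := hw.
transitivity (\sum_(p <- fillings w0) fill_weight w0 p
    * \sum_(1 <= m < M) sterm k m * ((1 - st) * zpart p m + st * zpart p m.+1)).
  rewrite big_seq [RHS]big_seq; apply: eq_bigr => p hp.
  have [] := mem_fillings hw hp; case: p hp => // h0 tl _ /andP [h0p _] sp sm _.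
  rewrite /= !big_cons big_nil; have [-> -> ->] := fill_weight_first hk sp sm.
  by rewrite -zpart_fill_first //; ring.
under eq_bigr do rewrite mulr_sumr.
rewrite exchange_big /=; apply: eq_bigr => m _.
rewrite /zeta_trunc !mulr_sumr -big_split /= mulr_sumr; apply: eq_bigr => p _; ring.
Qed.

Lemma zeta_trunc_succ k w M : pos_word (k :: w) -> (0 < M)%N ->
  zeta_trunc M.+1 (k :: w)
  = zeta_trunc M (k :: w) + sterm k M * ((1 - st) * zeta_trunc M w + st * zeta_trunc M.+1 w).
Proof. by move=> hp hM; rewrite !zeta_trunc_cons // big_nat_recr. Qed.

Lemma zeta_trunc1 k w : pos_word (k :: w) -> zeta_trunc 1 (k :: w) = 0.
Proof. by move=> hp; rewrite zeta_trunc_cons // big_geq. Qed.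

Definition subst_hbar (c : Qht) : ser := (map_poly sconst c).[s1mq].

Lemma subst_hbar1 : subst_hbar 1 = 1.
Proof. by rewrite /subst_hbar rmorph1 hornerC. Qed.
Lemma subst_hbarM a b : subst_hbar (a * b) = subst_hbar a * subst_hbar b.
Proof. by rewrite /subst_hbar rmorphM hornerM. Qed.
Lemma subst_hbarC c : subst_hbar c%:P = sconst c.
Proof. by rewrite /subst_hbar map_polyC hornerC. Qed.
Lemma subst_hbarX : subst_hbar hbar = s1mq.
Proof. by rewrite /subst_hbar /hbar map_polyX hornerX. Qed.

Lemma eval_hbarE c : eval_hbar c = subst_hbar c.
Proof.
rewrite /subst_hbar horner_coef size_map_inj_poly ?rmorph0 //; last exact: sconst_inj.
apply: funext => n; rewrite /eval_hbar sum_serE; apply: eq_bigr => i _.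
by rewrite coef_map sscaleE spowE.
Qed.

Definition pos_fsum (X : fsum) : bool := all (fun x => pos_word x.2) X.

Definition Ztrunc (M : nat) (X : fsum) : ser :=
  \sum_(x <- X) subst_hbar x.1 * zeta_trunc M x.2.

Lemma Ztrunc_word M w : Ztrunc M [:: (1, w)] = zeta_trunc M w.
Proof. by rewrite /Ztrunc big_seq1 subst_hbar1 mul1r. Qed.
Lemma Ztrunc_cat M X Y : Ztrunc M (X ++ Y) = Ztrunc M X + Ztrunc M Y.
Proof. by rewrite /Ztrunc big_cat. Qed.
Lemma Ztrunc_scale M c X : Ztrunc M (fscale c X) = subst_hbar c * Ztrunc M X.
Proof.
by rewrite /Ztrunc big_map mulr_sumr; apply: eq_bigr => x _; rewrite subst_hbarM mulrA.
Qed.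

Lemma Ztrunc_prefix_succ M k X : (0 < M)%N -> (0 < k)%N -> pos_fsum X ->
  Ztrunc M.+1 (prefix k X)
  = Ztrunc M (prefix k X) + sterm k M * ((1 - st) * Ztrunc M X + st * Ztrunc M.+1 X).
Proof.
move=> hM hk hX; rewrite /Ztrunc !big_map !mulr_sumr -big_split /= mulr_sumr -big_split /=.
rewrite big_seq [RHS]big_seq; apply: eq_bigr => x hx.
rewrite zeta_trunc_succ //=; last by rewrite pos_word_cons hk (allP hX x hx).
ring.
Qed.

Lemma Ztrunc_circ_succ M k X : (0 < M)%N -> (0 < k)%N -> pos_fsum X ->
  Ztrunc M.+1 (circ k X) = Ztrunc M (circ k X) + sterm k M * (Ztrunc M.+1 X - Ztrunc M X).
Proof.
move=> hM hk hX; rewrite /Ztrunc /circ !big_flatten !big_map /= -sumrB mulr_sumr -big_split /=.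
rewrite big_seq [RHS]big_seq; apply: eq_bigr => -[c w] /(allP hX) /=.
case: w => [_ | m w]; first by rewrite !big_nil !zeta_trunc_nil subrr !mulr0 addr0.
rewrite pos_word_cons => /andP [hm hw].
rewrite !big_map !big_cons !big_nil /= !addr0 !subst_hbarM subst_hbarX subst_hbar1.
rewrite !zeta_trunc_succ ?pos_word_cons ?hw ?andbT //; try lia.
by rewrite (stermD hk hm hM); ring.
Qed.

Lemma Ztrunc1_prefix k X : (0 < k)%N -> pos_fsum X -> Ztrunc 1 (prefix k X) = 0.
Proof.
move=> hk hX; rewrite /Ztrunc big_map big_seq big1 // => x hx.
by rewrite zeta_trunc1 ?mulr0 // pos_word_cons hk (allP hX x hx).
Qed.

Lemma Ztrunc1_circ k X : (0 < k)%N -> pos_fsum X -> Ztrunc 1 (circ k X) = 0.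
Proof.
move=> hk hX; rewrite /Ztrunc /circ big_flatten big_map big_seq big1 // => -[c w] /(allP hX).
case: w => [|m w] /=; first by rewrite big_nil.
rewrite pos_word_cons => /andP [hm hw].
rewrite !big_cons big_nil !zeta_trunc1 ?mulr0 ?addr0 // pos_word_cons hw andbT; lia.
Qed.

Lemma tstar_nil_l v : tstar [::] v = [:: (1, v)]. Proof. by []. Qed.
Lemma tstar_nil_r u : tstar u [::] = [:: (1, u)]. Proof. by case: u. Qed.

Lemma tstar_cons i u j v : tstar (i :: u) (j :: v) =
  prefix i (tstar u (j :: v))
  ++ prefix j (tstar (i :: u) v)
  ++ fscale (1 - 2%:R * tvar)%:P
       (prefix (i + j)%N (tstar u v) ++ fscale hbar (prefix (i + j - 1)%N (tstar u v)))
  ++ fscale (tvar ^+ 2 - tvar)%:P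
       (circ (i + j)%N (tstar u v) ++ fscale hbar (circ (i + j - 1)%N (tstar u v))).
Proof. by []. Qed.

Lemma pos_fsum_cat X Y : pos_fsum (X ++ Y) = pos_fsum X && pos_fsum Y.
Proof. exact: all_cat. Qed.
Lemma pos_fsum_scale c X : pos_fsum (fscale c X) = pos_fsum X.
Proof. exact: all_map. Qed.
Lemma pos_fsum_prefix k X : (0 < k)%N -> pos_fsum X -> pos_fsum (prefix k X).
Proof.
move=> hk hX; rewrite /pos_fsum all_map; apply/allP => x /(allP hX) hx /=.
by rewrite pos_word_cons hk.
Qed.
Lemma pos_fsum_circ k X : (0 < k)%N -> pos_fsum X -> pos_fsum (circ k X).
Proof.
move=> hk hX; apply/allP => y /flatten_mapP [[c [|m w]] /(allP hX) //=].
rewrite pos_word_cons => /andP [hm hw].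
by rewrite !inE => /orP [] /eqP -> /=; rewrite pos_word_cons hw andbT; lia.
Qed.

Lemma pos_fsum_tstar u v : pos_word u -> pos_word v -> pos_fsum (tstar u v).
Proof.
elim: u v => [|i u IHu] v hu hv; first by rewrite tstar_nil_l /pos_fsum /= hv.
elim: v hv => [|j v IHv] hv; first by rewrite tstar_nil_r /pos_fsum /= hu.
move: (hu) (hv); rewrite !pos_word_cons => /andP [hi hu'] /andP [hj hv'].
rewrite tstar_cons !(pos_fsum_cat, pos_fsum_scale) !pos_fsum_prefix ?pos_fsum_circ ?IHu ?IHv //.
all: lia.
Qed.

(* The two [z_i o+ z_j] terms of the product only enter through
   [sterm (i + j) M + s1mq * sterm (i + j - 1) M = sterm i M * sterm j M]. *)
Lemma Ztrunc_tstar_succ M i u j v : (0 < M)%N -> pos_word (i :: u) -> pos_word (j :: v) ->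
  Ztrunc M.+1 (tstar (i :: u) (j :: v)) = Ztrunc M (tstar (i :: u) (j :: v))
  + sterm i M * ((1 - st) * Ztrunc M (tstar u (j :: v)) + st * Ztrunc M.+1 (tstar u (j :: v)))
  + sterm j M * ((1 - st) * Ztrunc M (tstar (i :: u) v) + st * Ztrunc M.+1 (tstar (i :: u) v))
  + sterm i M * sterm j M
    * ((1 - st) ^+ 2 * Ztrunc M (tstar u v) - st ^+ 2 * Ztrunc M.+1 (tstar u v)).
Proof.
move=> hM hu hv; move: (hu) (hv); rewrite !pos_word_cons => /andP [hi hu'] /andP [hj hv'].
have [hij hij1] : (0 < i + j)%N /\ (0 < i + j - 1)%N by lia.
rewrite !tstar_cons !(Ztrunc_cat, Ztrunc_scale) !subst_hbarC subst_hbarX.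
rewrite !Ztrunc_prefix_succ ?pos_fsum_tstar // !Ztrunc_circ_succ ?pos_fsum_tstar //.
rewrite (stermD hi hj hM) !rmorphB rmorph1 rmorphM rmorph_nat rmorphXn -/st.
ring.
Qed.

Lemma Ztrunc1_tstar u v : pos_word u -> pos_word v ->
  Ztrunc 1 (tstar u v) = zeta_trunc 1 u * zeta_trunc 1 v.
Proof.
case: u => [|i u] hu; first by rewrite tstar_nil_l Ztrunc_word zeta_trunc_nil mul1r.
case: v => [|j v] hv; first by rewrite tstar_nil_r Ztrunc_word zeta_trunc_nil mulr1.
move: (hu) (hv); rewrite !pos_word_cons => /andP [hi hu'] /andP [hj hv'].
have [hij hij1] : (0 < i + j)%N /\ (0 < i + j - 1)%N by lia.
rewrite tstar_cons !(Ztrunc_cat, Ztrunc_scale) !Ztrunc1_prefix ?Ztrunc1_circ ?pos_fsum_tstar //.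
by rewrite !zeta_trunc1 // !(mulr0, addr0).
Qed.

Lemma Ztrunc_tstar_step M : (0 < M)%N ->
  (forall u v, pos_word u -> pos_word v ->
     Ztrunc M (tstar u v) = zeta_trunc M u * zeta_trunc M v) ->
  forall u v, pos_word u -> pos_word v ->
  Ztrunc M.+1 (tstar u v) = zeta_trunc M.+1 u * zeta_trunc M.+1 v.
Proof.
move=> hM IHM; elim=> [|i u IHu] v hu hv.
  by rewrite tstar_nil_l Ztrunc_word zeta_trunc_nil mul1r.
elim: v hv => [|j v IHv] hv; first by rewrite tstar_nil_r Ztrunc_word zeta_trunc_nil mulr1.
move: (hu) (hv); rewrite !pos_word_cons => /andP [hi hu'] /andP [hj hv'].
rewrite Ztrunc_tstar_succ // !IHM // ?pos_word_cons ?hi ?hj // !IHu ?pos_word_cons ?hj // IHv //.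
by rewrite !zeta_trunc_succ //; ring.
Qed.

Lemma Ztrunc_tstar M u v : (0 < M)%N -> pos_word u -> pos_word v ->
  Ztrunc M (tstar u v) = zeta_trunc M u * zeta_trunc M v.
Proof.
case: M => // M _; elim: M u v => [|M IH]; first exact: Ztrunc1_tstar.
exact: Ztrunc_tstar_step.
Qed.

Lemma eq_smul_coef (f f' g g' : ser) n :
  (forall i, (i <= n)%N -> f i = f' i) -> (forall i, (i <= n)%N -> g i = g' i) ->
  smul f g n = smul f' g' n.
Proof.
by move=> hf hg; apply: eq_bigr => i _; rewrite hf ?hg ?leq_subr // -ltnS.
Qed.

Lemma coef_stermM_lt k m (g : ser) i : (1 < k)%N -> (i < m)%N -> (sterm k m * g) i = 0.
Proof.
move=> hk hi; rewrite stermE -mulrA coef_sqXM; case: leqP => // hle.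
have : (m <= (k - 1) * m)%N by rewrite leq_pmull // subn_gt0.
lia.
Qed.

Lemma zeta_q_trunc p N i : admissible_word p -> (i < N)%N -> zeta_q p i = zpart p N i.
Proof.
case: p => [|k p] /andP [_ hk] hi //.
rewrite /zeta_q !zpart_cons (@big_cat_nat _ _ _ i.+1 1 N) // [in RHS]/= add_serE.
rewrite [X in _ = _ + X]sum_serE [X in _ = _ + X]big1_seq ?addr0 // => m /andP [_].
by rewrite mem_index_iota => /andP [hm _]; apply: coef_stermM_lt.
Qed.

Lemma admissible_fillings w p : admissible_word w -> p \in fillings w -> admissible_word p.
Proof.
case: w => [|k w]; first by rewrite inE => _ /eqP ->.
move=> /andP [hw hk] hp; have {}hw : pos_word (k :: w) := hw.
have [pp _ _ _] := mem_fillings hw hp.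
apply/andP; split; first exact: pp.
case: w hw hp => [|k' w] hw; first by rewrite inE => /eqP ->.
move: hw; rewrite pos_word_cons => /andP [_ hw].
rewrite fillings_cons2 => /flatten_mapP [[|h0 tl] /(mem_fillings hw) [] //].
by rewrite pos_word_cons => /andP [h0p _] _ _ _; rewrite !inE => /or3P [] /eqP -> /=; lia.
Qed.

Lemma zeta_t_trunc w N i : admissible_word w -> (i < N)%N -> zeta_t w i = zeta_trunc N w i.
Proof.
move=> hw hi; rewrite /zeta_t /zeta_trunc sum_serE big_seq [RHS]big_seq.
apply: eq_bigr => p hp; rewrite /fill_weight -mulrA coef_sconstM /sscale spowE.
congr (_ * _); apply: eq_smul_coef => // j hj.
by apply: zeta_q_trunc; [exact: admissible_fillings hp | lia].
Qed.

Lemma Zqt_trunc X N i : in_H0 X -> (i < N)%N -> Zqt X i = Ztrunc N X i.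
Proof.
move=> hX hi; rewrite /Zqt /Ztrunc sum_serE big_seq [RHS]big_seq.
apply: eq_bigr => x hx; rewrite mul_serE eval_hbarE; apply: eq_smul_coef => // j hj.
by apply: zeta_t_trunc; [exact: (allP hX x hx) | lia].
Qed.

Definition heads_ge (a : nat) (X : fsum) : bool :=
  all (fun x => if x.2 is k :: _ then (a <= k)%N else false) X.

Lemma heads_ge_cat a X Y : heads_ge a (X ++ Y) = heads_ge a X && heads_ge a Y.
Proof. exact: all_cat. Qed.
Lemma heads_ge_scale a c X : heads_ge a (fscale c X) = heads_ge a X.
Proof. exact: all_map. Qed.
Lemma heads_ge_prefix a k X : (a <= k)%N -> heads_ge a (prefix k X).
Proof. by move=> hk; rewrite /heads_ge all_map; apply/allP. Qed.
Lemma heads_ge_circ a k X : (a < k)%N -> heads_ge a (circ k X).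
Proof.
move=> hk; apply/allP => y /flatten_mapP [[c [|m w]] _ //=].
by rewrite !inE => /orP [] /eqP -> /=; lia.
Qed.

Lemma in_H0_tstar u v : admissible_word u -> admissible_word v -> in_H0 (tstar u v).
Proof.
case: u => [|i u] hu hv; first by rewrite tstar_nil_l /in_H0 /= hv.
case: v hv => [|j v] hv; first by rewrite tstar_nil_r /in_H0 /= hu.
move: hu hv => /andP [pu hi] /andP [pv hj].
have hh : heads_ge (minn i j) (tstar (i :: u) (j :: v)).
  rewrite tstar_cons !(heads_ge_cat, heads_ge_scale) !heads_ge_prefix ?heads_ge_circ //; lia.
apply/allP => x hx; apply/andP; split; first exact: (allP (pos_fsum_tstar pu pv) x hx).
by move: (allP hh x hx); case: x.2 => // k; lia.
Qed.

Lemma in_H0_star v w : in_H0 v -> in_H0 w -> in_H0 (star v w).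
Proof.
move=> hv hw; apply/allP => z /flattenP [Y /allpairsPdep [x [y [hx hy ->]]]] /mapP [z' hz' ->].
exact: (allP (in_H0_tstar (allP hv x hx) (allP hw y hy)) z' hz').
Qed.

Lemma Ztrunc_star N v w : (0 < N)%N -> pos_fsum v -> pos_fsum w ->
  Ztrunc N (star v w) = Ztrunc N v * Ztrunc N w.
Proof.
move=> hN hv hw; rewrite /star {1}/Ztrunc big_flatten big_allpairs_dep /= big_distrl /=.
rewrite big_seq [RHS]big_seq; apply: eq_bigr => x hx.
rewrite big_distrr /= big_seq [RHS]big_seq; apply: eq_bigr => y hy.
rewrite -[\sum_(_ <- _) _]/(Ztrunc N _) Ztrunc_scale.
rewrite Ztrunc_tstar ?(allP hv x hx) ?(allP hw y hy) //.
by rewrite subst_hbarM; ring.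
Qed.

Lemma in_H0_pos X : in_H0 X -> pos_fsum X.
Proof. by move/allP=> hX; apply/allP => x /hX /andP []. Qed.

Theorem proposition2p5 (v w : fsum) :
  in_H0 v -> in_H0 w ->
  forall n : nat, Zqt (star v w) n = smul (Zqt v) (Zqt w) n.
Proof.
move=> hv hw n.
rewrite (Zqt_trunc (in_H0_star hv hw) (ltnSn n)) Ztrunc_star ?in_H0_pos //.
by apply: eq_smul_coef => i hi; rewrite (Zqt_trunc _ (hi : i < n.+1)%N).
Qed.
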